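(* Let $\mathcal{A}=(Q,\delta,s)$ be an NFA over a finite alphabet $\Sigma$ and let $\mathcal{P}$ be any forward-stable partition on $\mathcal{A}$. Then $B_{\mathcal{P}}:=\{(u,v)\in Q\times Q: u,v\in S \text{ for some } S\in\mathcal{P}\}$ is a bisimulation on $\mathcal{A}^{-1}$.
   Context: An NFA is $\mathcal{A}=(Q,\delta,s)$ with $\delta:Q\times\Sigma\to2^Q$; write $\delta_a(u)=\delta(u,a)$, $\delta_a(T)=\bigcup_{u\in T}\delta_a(u)$, $\delta_a^{-1}(u)=\{v:u\in\delta_a(v)\}$. $\mathcal{A}^{-1}=(Q,\delta^{-1},s)$ with $\delta^{-1}(u,a)=\delta^{-1}_a(u)$. A bisimulation on an NFA $(Q,\gamma,s)$ is a relation $B\subseteq Q\times Q$ such that for all $(u,v)\in B$ and $a\in\Sigma$: if $u'\in\gamma_a(u)$ then some $v'\in\gamma_a(v)$ has $(u',v')\in B$, and if $v'\in\gamma_a(v)$ then some $u'\in\gamma_a(u)$ has $(u',v')\in B$. A partition $\mathcal{P}$ of $Q$ is forward-stable on $\mathcal{A}$ if for any parts $S,T\in\mathcal{P}$ and every $a$, $S\subseteq\delta_a(T)$ or $S\cap\delta_a(T)=\emptyset$. *)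

From mathcomp Require Import all_boot.
Set Implicit Arguments. Unset Strict Implicit. Unset Printing Implicit Defensive.

Record NFA (Sigma : finType) := MkNFA {
  state : finType;
  trans : state -> Sigma -> {set state};
  start : state }.

Definition img (Sigma : finType) (Q : finType) (gamma : Q -> Sigma -> {set Q})
  (a : Sigma) (T : {set Q}) : {set Q} := \bigcup_(u in T) gamma u a.

Definition inv_trans (Sigma Q : finType) (gamma : Q -> Sigma -> {set Q})
  : Q -> Sigma -> {set Q} := fun u a => [set v | u \in gamma v a].

Definition inv_nfa (Sigma : finType) (A : NFA Sigma) : NFA Sigma :=
  @MkNFA Sigma (state A) (inv_trans (@trans Sigma A)) (start A).

Definition bisimulation (Sigma : finType) (A : NFA Sigma)
  (B : state A -> state A -> Prop) : Prop :=
  forall u v, B u v -> forall a : Sigma,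
    (forall u', u' \in trans u a -> exists v', v' \in trans v a /\ B u' v') /\
    (forall v', v' \in trans v a -> exists u', u' \in trans u a /\ B u' v').

Definition forward_stable (Sigma : finType) (A : NFA Sigma)
  (P : {set {set state A}}) : Prop :=
  partition P [set: state A] /\
  forall S T, S \in P -> T \in P -> forall a : Sigma,
    S \subset img (@trans Sigma A) a T \/ S :&: img (@trans Sigma A) a T = set0.

Definition B_of (Q : finType) (P : {set {set Q}}) (u v : Q) : Prop :=
  exists2 S, S \in P & (u \in S) && (v \in S).

From mathcomp Require Import all_boot.

(* If u and v lie in a common block S and u has an a-predecessor u', let T be
   the block of u'.  Then u lies in delta_a(T), so forward stability forces
   S to be contained in delta_a(T), and v has an a-predecessor in T as well. *)

Lemma B_of_block {Q : finType} {P : {set {set Q}}} {S : {set Q}} {u v : Q} :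
  S \in P -> u \in S -> v \in S -> B_of P u v.
Proof. by move=> SP uS vS; exists S; rewrite ?uS ?vS. Qed.

Lemma B_of_sym {Q : finType} {P : {set {set Q}}} {u v : Q} :
  B_of P u v -> B_of P v u.
Proof. by case=> S SP /andP[uS vS]; exact: B_of_block SP vS uS. Qed.

Section ForwardStable.

Context {Sigma : finType} {A : NFA Sigma} {P : {set {set state A}}}.
Hypothesis stableP : forward_stable P.

Lemma forward_stable_img_subset {S T : {set state A}} {a : Sigma} {u : state A} :
  S \in P -> T \in P -> u \in S -> u \in img (@trans Sigma A) a T ->
  S \subset img (@trans Sigma A) a T.
Proof.
move=> SP TP uS uT; have [//|disj] := stableP.2 S T SP TP a.
by have := in_set0 u; rewrite -disj inE uS uT.
Qed.

Lemma forward_stable_pred {u v u' : state A} {a : Sigma} :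
  B_of P u v -> u \in trans u' a ->
  exists2 v', v \in trans v' a & B_of P u' v'.
Proof.
case=> S SP /andP[uS vS] u'u.
have u'P : u' \in cover P by case/and3P: stableP.1 => /eqP-> _ _; rewrite inE.
have TP := pblock_mem u'P; have u'T : u' \in pblock P u' by rewrite mem_pblock.
have uT : u \in img (@trans Sigma A) a (pblock P u') by apply/bigcupP; exists u'.
have /bigcupP[v' v'T v'v] := subsetP (forward_stable_img_subset SP TP uS uT) v vS.
by exists v'; last exact: B_of_block TP u'T v'T.
Qed.

End ForwardStable.

Theorem lemma21 (Sigma : finType) (A : NFA Sigma) (P : {set {set state A}}) :
  @forward_stable Sigma A P -> @bisimulation Sigma (inv_nfa A) (@B_of (state A) P).
Proof.
move=> stableP u v uBv a; split=> [u' | v']; rewrite /= inE => hop.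
- have [v' vv' u'Bv'] := forward_stable_pred stableP uBv hop.
  by exists v'; rewrite inE.
- have [u' uu' v'Bu'] := forward_stable_pred stableP (B_of_sym uBv) hop.
  by exists u'; rewrite inE; split; last exact: B_of_sym.
Qed.
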